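(* Let $\phi\ge1$. Consider a knapsack instance with arbitrary profits $p_1,\ldots,p_n\in\mathbb{R}_{\ge0}$ in which each weight $w_i$ is chosen uniformly at random from an arbitrary interval $A_i\subseteq[0,1]$ of length $1/\phi$, independently of the other weights, and let $\mathcal{P}$ be the set of Pareto-optimal solutions. For $k\in\mathbb{N}$ and $i\in\{0,\ldots,k-1\}$ let $I_i^k=(ni/k,\,n(i+1)/k]$, call $I_i^k$ non-empty if there is $x\in\mathcal{P}$ with $w^{\mathsf T}x\in I_i^k$, and let $X^k$ be the number of non-empty intervals $I_i^k$ plus one. Then for every $k\in\mathbb{N}$, $\mathbb{E}[X^k]\le n^2\phi+1$.
   Context: Solutions are vectors $x\in\{0,1\}^n$. A solution $y$ dominates $x$ if $p^{\mathsf T}y\ge p^{\mathsf T}x$ and $w^{\mathsf T}y\le w^{\mathsf T}x$ with at least one inequality strict; $x$ is Pareto-optimal if no solution dominates it. *)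

From HB Require Import structures.
From mathcomp Require Import all_boot all_order all_algebra.
From mathcomp Require Import all_classical all_reals all_analysis.
Set Implicit Arguments. Unset Strict Implicit. Unset Printing Implicit Defensive.
Import Order.TTheory GRing.Theory Num.Theory.
Local Open Scope ring_scope.
Local Open Scope classical_set_scope.

Section Knapsack.
Variable R : realType.
Variable n : nat.

Definition sol := {ffun 'I_n -> bool}.

(* p^T x and w^T x, with p, w given as real sequences (only indices < n matter). *)
Definition dotp (v : nat -> R) (x : sol) : R := \sum_(i < n) (x i)%:R * v i.

Definition dominates (p w : nat -> R) (y x : sol) : bool :=
  [&& dotp p x <= dotp p y, dotp w y <= dotp w x &
      (dotp p x < dotp p y) || (dotp w y < dotp w x)].

Definition pareto_optimal (p w : nat -> R) (x : sol) : bool :=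
  [forall y : sol, ~~ dominates p w y x].

Definition interval_nonempty (p w : nat -> R) (k : nat) (i : nat) : bool :=
  [exists x : sol, pareto_optimal p w x &&
     ((n * i)%:R / k%:R < dotp w x) && (dotp w x <= (n * i.+1)%:R / k%:R)].

Definition Xk (p w : nat -> R) (k : nat) : nat :=
  #|[set i : 'I_k | interval_nonempty p w k i]| + 1.

Fixpoint iter_int (a : nat -> R) (len : R) (m : nat)
    (F : (nat -> R) -> \bar R) (w : nat -> R) : \bar R :=
  match m with
  | 0 => F w
  | m'.+1 => (\int[lebesgue_measure]_(t in `[a m', (a m' + len)%R])
               iter_int a len m' F (fun j => if j == m' then t else w j))%E
  end.

(* Expectation of F(w) when w_0, ..., w_{n-1} are independent and w_j is
   uniform on [a j, a j + 1/phi] (density phi on each coordinate). *)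
Definition expect_unif (a : nat -> R) (phi : R) (F : (nat -> R) -> \bar R) : \bar R :=
  ((phi ^+ n)%:E * iter_int a phi^-1 n F (fun _ => 0%R))%E.

End Knapsack.

From HB Require Import structures.
From mathcomp Require Import all_boot all_order all_algebra.
From mathcomp Require Import all_classical all_reals all_analysis.
From mathcomp Require Import measurable_realfun.
From mathcomp Require Import ring.

Set Implicit Arguments.
Unset Strict Implicit.
Unset Printing Implicit Defensive.
Import Order.TTheory GRing.Theory Num.Theory.
Local Open Scope ring_scope.
Local Open Scope classical_set_scope.

(* Fix a slab (t, t + e] of weights.  If it contains the weight of a
   Pareto-optimal solution, let x be the most profitable solution of weight at
   most t and y the lightest solution more profitable than x: then
   t < w(y) <= t + e, and y contains an item j that x does not.  So for some j
   the lightest solution containing j that beats every j-free solution of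
   weight at most t weighs between t and t + e.  Beating those solutions does
   not depend on w_j, and a solution containing j weighs w_j plus something
   independent of w_j; so once the other weights are fixed this event confines
   w_j to an interval of length e, which has probability at most e phi.  A
   union bound over the n items and the k slabs of width n/k gives
   E[X^k] <= 1 + k n (n/k) phi.  The expectation is an iterated integral, and
   Fubini-Tonelli lets the integral over w_j be taken first. *)

Section SequenceSpace.
Variable R : realType.

Definition seqR := nat -> R.
HB.instance Definition _ := Choice.copy seqR (nat -> R).
HB.instance Definition _ := isPointed.Build seqR (fun _ => 0).

Definition coord_preimages : set (set seqR) :=
  \bigcup_(i in [set: nat])
    preimage_set_system [set: seqR] (fun w : seqR => w i) measurable.

HB.instance Definition _ := @isMeasurable.Build default_measure_display seqR
  <<s coord_preimages>> (@sigma_algebra0 _ setT _) (@sigma_algebraC _ _)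
  (@sigma_algebra_bigcup _ _ _).

Lemma measurable_coord i : measurable_fun [set: seqR] (fun w : seqR => w i).
Proof.
move=> _ Y mY; rewrite setTI; apply: sub_sigma_algebra.
by exists i => //; exists Y => //; rewrite setTI.
Qed.

Lemma measurable_fun_seqR d (T : measurableType d) (D : set T) (f : T -> seqR) :
  measurable D -> (forall i, measurable_fun D (fun x => f x i)) ->
  measurable_fun D f.
Proof.
move=> mD mf; apply: (measurability coord_preimages) => //.
by move=> _ [_ [i _ [Y mY <-]] <-]; rewrite setTI; exact: mf.
Qed.

Definition update (w : seqR) (j : nat) (t : R) : seqR :=
  fun l => if l == j then t else w l.

Lemma update_update (w : seqR) j s t : update (update w j s) j t = update w j t.
Proof. by apply/funext => i; rewrite /update; case: eqP. Qed.

Lemma update_comm (w : seqR) j l s t : l != j ->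
  update (update w j s) l t = update (update w l t) j s.
Proof.
move=> lj; apply/funext => i; rewrite /update.
by case: (eqVneq i l) => [->|//]; rewrite (negbTE lj).
Qed.

Lemma measurable_update j :
  measurable_fun [set: seqR * R] (fun p : seqR * R => update p.1 j p.2).
Proof.
apply: measurable_fun_seqR => // i; rewrite /update; case: (i == j).
  exact: measurable_snd.
exact: measurableT_comp (measurable_coord i) measurable_fst.
Qed.

Lemma measurable_update_at (w : seqR) j :
  measurable_fun [set: R] (fun t => update w j t).
Proof. by apply: measurable_fun_seqR => // i; rewrite /update; case: (i == j). Qed.

Lemma measurable_update2 (w : seqR) j l :
  measurable_fun [set: R * R] (fun p : R * R => update (update w j p.1) l p.2).
Proof.
apply: measurable_fun_seqR => // i; rewrite /update.
case: (i == l); first exact: measurable_snd.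
by case: (i == j); first exact: measurable_fst.
Qed.

End SequenceSpace.

Section RectanglePatch.
Context d1 d2 (T1 : measurableType d1) (T2 : measurableType d2) (R : realType).
Local Open Scope ereal_scope.

Lemma patch_integral_rect (m2 : {measure set T2 -> \bar R})
    (A : set T1) (B : set T2) (H : T1 * T2 -> \bar R) x :
  ((fun x => \int[m2]_(y in B) H (x, y)) \_ A) x =
  \int[m2]_y (H \_ (A `*` B)) (x, y).
Proof.
rewrite /patch; case: ifPn => xA.
  rewrite integral_mkcond; apply: eq_integral => y _; rewrite /patch.
  case: ifPn => yB; case: ifPn => //.
  - by move=> /negP; case; apply/mem_set; split; apply/set_mem.
  - by move=> /set_mem [_ /= yB']; move/negP: yB; case; apply/mem_set.
rewrite -[LHS](integral0 m2 setT); apply: eq_integral => y _.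
by case: ifPn => // /set_mem [/= xA' _]; move/negP: xA; case; exact/mem_set.
Qed.

End RectanglePatch.

Section RectangleFubini.
Context d1 d2 (T1 : measurableType d1) (T2 : measurableType d2) (R : realType).
Local Open Scope ereal_scope.
Variables (m1 : {sigma_finite_measure set T1 -> \bar R})
          (m2 : {sigma_finite_measure set T2 -> \bar R}).

Lemma integral_rect_swap (A : set T1) (B : set T2) (H : T1 * T2 -> \bar R) :
  measurable A -> measurable B -> measurable_fun setT H -> (forall z, 0 <= H z) ->
  \int[m1]_(x in A) \int[m2]_(y in B) H (x, y) =
  \int[m2]_(y in B) \int[m1]_(x in A) H (x, y).
Proof.
move=> mA mB mH H0; set HAB := H \_ (A `*` B).
have mHAB : measurable_fun setT HAB.
  have mAB : measurable (A `*` B) by exact: measurableX.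
  by apply/(measurable_restrictT H mAB); exact: measurable_funTS.
have HAB0 z : 0 <= HAB z by rewrite /HAB /patch; case: ifP.
rewrite integral_mkcond [RHS]integral_mkcond.
under eq_integral => x _ do rewrite patch_integral_rect.
rewrite (fubini_tonelli HAB mHAB HAB0); apply: eq_integral => y _.
rewrite (@patch_integral_rect _ _ _ _ _ m1 B A (fun z => H (z.2, z.1))).
apply: eq_integral => x _; rewrite /HAB /patch.
by congr (if _ then _ else _); apply/idP/idP => /set_mem [? ?]; apply/mem_set.
Qed.

End RectangleFubini.

Section IntegrateCoord.
Variable R : realType.
Local Notation seqR := (seqR R).
Local Notation mu := (@lebesgue_measure R).
Local Open Scope ereal_scope.

Definition nonneg_mfun (F : seqR -> \bar R) :=
  measurable_fun setT F /\ forall w, 0 <= F w.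

Definition integrate_coord (D : set R) (j : nat) (F : seqR -> \bar R) : seqR -> \bar R :=
  fun w => \int[mu]_(t in D) F (update w j t).

Lemma measurable_fun_update_at (F : seqR -> \bar R) D w j :
  measurable_fun setT F -> measurable_fun D (fun t => F (update w j t)).
Proof.
move=> mF; apply: measurable_funTS.
exact: measurableT_comp mF (measurable_update_at w j).
Qed.

Lemma nonneg_mfun_integrate_coord D j F : measurable D ->
  nonneg_mfun F -> nonneg_mfun (integrate_coord D j F).
Proof.
move=> mD [mF F0]; split; last by move=> w; apply: integral_ge0.
pose G := fun p : seqR * R => F (update p.1 j p.2).
have mG : measurable_fun setT G := measurableT_comp mF (measurable_update j).
have -> : integrate_coord D j F = fubini_F mu (G \_ (setT `*` D)).
  apply/funext => w; rewrite /integrate_coord /fubini_F [LHS]integral_mkcond.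
  apply: eq_integral => t _; rewrite /patch /=.
  by congr (if _ then _ else _); apply/idP/idP => /set_mem H; apply/mem_set;
    [split | case: H].
apply: measurable_fun_fubini_tonelli_F.
  have mTD : measurable ([set: seqR] `*` D) by exact: measurableX.
  by apply/(measurable_restrictT G mTD); exact: measurable_funTS.
by move=> z; rewrite /patch; case: ifP => // _; exact: F0.
Qed.

Lemma nonneg_mfun_add F G : nonneg_mfun F -> nonneg_mfun G ->
  nonneg_mfun (fun w => F w + G w).
Proof.
move=> [mF F0] [mG G0]; split; first exact: emeasurable_funD.
by move=> w; exact: adde_ge0.
Qed.

Lemma nonneg_mfun_sum (I : Type) (s : seq I) (Fs : I -> seqR -> \bar R) :
  (forall i, nonneg_mfun (Fs i)) -> nonneg_mfun (fun w => \sum_(i <- s) Fs i w).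
Proof.
move=> nFs; split; first by apply: emeasurable_sum => i; exact: (nFs i).1.
by move=> w; apply: sume_ge0 => i _; exact: (nFs i).2.
Qed.

Lemma integrate_coord_comm D E j l F : measurable D -> measurable E -> l != j ->
  nonneg_mfun F -> forall w,
  integrate_coord D j (integrate_coord E l F) w =
  integrate_coord E l (integrate_coord D j F) w.
Proof.
move=> mD mE lj [mF F0] w; rewrite /integrate_coord.
under [RHS]eq_integral => t _ do
  under eq_integral => s _ do rewrite -(update_comm _ _ _ lj).
pose H := fun p : R * R => F (update (update w j p.1) l p.2).
have mH : measurable_fun setT H :=
  measurableT_comp mF (measurable_update2 w j l).
exact: (@integral_rect_swap _ _ _ _ _ mu mu D E H mD mE mH (fun=> F0 _)).
Qed.

Variables (a : nat -> R) (len : R).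

Definition coord_itv j : set R := [set` `[a j, a j + len]%R].

Lemma measurable_coord_itv j : measurable (coord_itv j).
Proof. exact: measurable_itv. Qed.

Lemma iter_intS m F w :
  iter_int a len m.+1 F w = integrate_coord (coord_itv m) m (iter_int a len m F) w.
Proof. by []. Qed.

Lemma nonneg_mfun_iter_int m F : nonneg_mfun F -> nonneg_mfun (iter_int a len m F).
Proof.
move=> nF; elim: m => [//|m IH].
exact: nonneg_mfun_integrate_coord (measurable_coord_itv m) IH.
Qed.

Lemma le_iter_int m F G : nonneg_mfun F -> nonneg_mfun G ->
  (forall w, F w <= G w) -> forall w, iter_int a len m F w <= iter_int a len m G w.
Proof.
move=> nF nG FG; elim: m => [//|m IH] w.
rewrite !iter_intS; apply: ge0_le_integral => //.
- exact: measurable_coord_itv.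
- by move=> t _; exact: (nonneg_mfun_iter_int m nF).2.
- exact: measurable_fun_update_at (nonneg_mfun_iter_int m nF).1.
- exact: measurable_fun_update_at (nonneg_mfun_iter_int m nG).1.
Qed.

Lemma iter_intD m F G w : nonneg_mfun F -> nonneg_mfun G ->
  iter_int a len m (fun v => F v + G v) w =
  iter_int a len m F w + iter_int a len m G w.
Proof.
move=> nF nG; elim: m w => [//|m IH] w; rewrite iter_intS /integrate_coord.
under eq_integral => t _ do rewrite IH.
apply: ge0_integralD.
- exact: measurable_coord_itv.
- by move=> t _; exact: (nonneg_mfun_iter_int m nF).2.
- exact: measurable_fun_update_at (nonneg_mfun_iter_int m nF).1.
- by move=> t _; exact: (nonneg_mfun_iter_int m nG).2.
- exact: measurable_fun_update_at (nonneg_mfun_iter_int m nG).1.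
Qed.

Hypothesis len_gt0 : (0 < len)%R.

Lemma lebesgue_coord_itv j : mu (coord_itv j) = len%:E.
Proof.
by rewrite lebesgue_measure_itv /= lte_fin ltrDl len_gt0 -EFinD addrAC subrr add0r.
Qed.

Lemma integral_coord_itv_cst j (c : \bar R) : \int[mu]_(t in coord_itv j) c = c * len%:E.
Proof.
have -> := integral_cst mu (measurable_coord_itv j) c.
by congr (_ * _); exact: lebesgue_coord_itv.
Qed.

Lemma iter_int_cst (c : R) m w : iter_int a len m (fun=> c%:E) w = (c * len ^+ m)%:E.
Proof.
elim: m w => [|m IH] w; first by rewrite /= mulr1.
rewrite iter_intS /integrate_coord.
under eq_integral => t _ do rewrite IH.
by rewrite integral_coord_itv_cst -EFinM exprSr mulrA.
Qed.

Lemma iter_int_sum (I : Type) (s : seq I) (Fs : I -> seqR -> \bar R) m w :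
  (forall i, nonneg_mfun (Fs i)) ->
  iter_int a len m (fun w => \sum_(i <- s) Fs i w) w =
  \sum_(i <- s) iter_int a len m (Fs i) w.
Proof.
move=> nFs; elim: s => [|x s IH].
  under eq_fun => v do rewrite big_nil.
  by rewrite big_nil (iter_int_cst 0) mul0r.
rewrite big_cons -IH.
under eq_fun => v do rewrite big_cons.
by apply: iter_intD => //; exact: nonneg_mfun_sum.
Qed.

Lemma iter_int_integrate_coord_comm G l m w : nonneg_mfun G -> (m <= l)%N ->
  iter_int a len m (integrate_coord (coord_itv l) l G) w =
  integrate_coord (coord_itv l) l (iter_int a len m G) w.
Proof.
move=> nG; elim: m w => [//|m IH] w lm; rewrite iter_intS /integrate_coord.
under eq_integral => s _ do rewrite IH ?(ltnW lm) //.
have lm' : l != m by rewrite neq_ltn lm orbT.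
exact: (integrate_coord_comm (measurable_coord_itv m) (measurable_coord_itv l) lm'
  (nonneg_mfun_iter_int m nG)).
Qed.

Lemma iter_int_integrate_coord G j m w : nonneg_mfun G -> (j < m)%N ->
  iter_int a len m (integrate_coord (coord_itv j) j G) w =
  len%:E * iter_int a len m G w.
Proof.
move=> nG; elim: m w => [//|m IH] w; rewrite ltnS leq_eqVlt iter_intS /integrate_coord.
move=> /predU1P[->|jm].
  under eq_integral => s _ do
    rewrite iter_int_integrate_coord_comm // /integrate_coord.
  under eq_integral => s _ do under eq_integral => t _ do rewrite update_update.
  by rewrite integral_coord_itv_cst muleC.
under eq_integral => s _ do rewrite IH //.
apply: ge0_integralZl => //.
- exact: measurable_coord_itv.
- exact: measurable_fun_update_at (nonneg_mfun_iter_int m nG).1.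
- by move=> t _; exact: (nonneg_mfun_iter_int m nG).2.
- by rewrite lee_fin ltW.
Qed.

Lemma iter_int_le_coord_bound G j m (eps : R) w : nonneg_mfun G -> (j < m)%N ->
  (0 <= eps)%R -> (forall v, integrate_coord (coord_itv j) j G v <= eps%:E) ->
  iter_int a len m G w <= (eps * len ^+ m.-1)%:E.
Proof.
move=> nG jm eps0 Gj.
have eps_mfun : nonneg_mfun (fun=> eps%:E).
  by split=> // v; rewrite lee_fin.
have nGj := nonneg_mfun_integrate_coord j (measurable_coord_itv j) nG.
have := le_iter_int m nGj eps_mfun Gj w.
rewrite iter_int_integrate_coord // iter_int_cst.
case: m jm => [//|m] _ h.
by rewrite -(@lee_pmul2l _ len%:E) ?lte_fin // -EFinM mulrCA -exprS.
Qed.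

End IntegrateCoord.

Section Winner.
Variables (R : realType) (n : nat) (p : nat -> R).
Implicit Types (w : nat -> R) (x y : sol n).

Lemma dotp0 w : dotp w ([ffun=> false] : sol n) = 0.
Proof. by rewrite /dotp big1 // => i _; rewrite ffunE mul0r. Qed.

Lemma dotp_lt_exists x y : (forall i : 'I_n, 0 <= p i) ->
  dotp p x < dotp p y -> exists j : 'I_n, y j && ~~ x j.
Proof.
move=> p0 pxy; apply/existsP; apply: contraTT pxy => /existsPn yx.
rewrite -leNgt; apply: ler_sum => i _; have := yx i.
by case: (y i); case: (x i) => //= _; rewrite mul0r mul1r p0.
Qed.

Definition beats_below (j : 'I_n) (t : R) w y : bool :=
  [forall x : sol n, ~~ x j && (dotp w x <= t) ==> (dotp p x < dotp p y)].

Definition winner_in (j : 'I_n) (t e : R) w : bool :=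
  [exists y : sol n, [&& y j, beats_below j t w y & dotp w y <= t + e]] &&
  [forall y : sol n, y j && beats_below j t w y ==> (t < dotp w y)].

Lemma pareto_winner_in w (t e : R) : (forall i : 'I_n, 0 <= p i) -> 0 <= t ->
  [exists x : sol n, [&& pareto_optimal p w x, t < dotp w x & dotp w x <= t + e]] ->
  [exists j, winner_in j t e w].
Proof.
move=> p0 t0 /existsP [x0 /and3P [x0_pareto tx0 x0e]].
have w00 : dotp w ([ffun=> false] : sol n) <= t by rewrite dotp0.
have [xs /= wxs xs_max] := arg_maxP (P := fun x => dotp w x <= t) (dotp p) w00.
have pxs : dotp p xs < dotp p x0.
  rewrite ltNge; apply/negP => px0.
  move/forallP: x0_pareto => /(_ xs); rewrite /dominates px0 /=.
  have wxs_x0 := le_lt_trans wxs tx0.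
  by rewrite ltW // wxs_x0 orbT.
have [ys /= pys ys_min] := arg_minP (P := fun y => dotp p xs < dotp p y) (dotp w) pxs.
have not_below y : dotp p xs < dotp p y -> t < dotp w y.
  by move=> pxy; rewrite ltNge; apply/negP => /xs_max; rewrite leNgt pxy.
have [j /andP [ysj xsj]] := dotp_lt_exists p0 pys.
have beats y : dotp p xs < dotp p y -> beats_below j t w y.
  move=> pxy; apply/forallP => x; apply/implyP => /andP [_ wx].
  exact: le_lt_trans (xs_max _ wx) pxy.
apply/existsP; exists j; apply/andP; split.
  apply/existsP; exists ys; rewrite ysj beats //=.
  exact: le_trans (ys_min _ pxs) x0e.
apply/forallP => y; apply/implyP => /andP [yj /forallP /(_ xs)].
by rewrite xsj wxs /= => /not_below.
Qed.

End Winner.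

Section MeasurableBool.
Context d (T : measurableType d).
Implicit Types (f g : T -> bool).

Lemma measurable_implyb f g : measurable_fun setT f -> measurable_fun setT g ->
  measurable_fun setT (fun x => f x ==> g x).
Proof.
move=> mf mg; under eq_fun => x do rewrite implybE.
exact/measurable_or/mg/measurable_neg.
Qed.

Lemma measurable_forallb (I : finType) (P : I -> T -> bool) :
  (forall i, measurable_fun setT (P i)) ->
  measurable_fun setT (fun x => [forall i, P i x]).
Proof.
move=> mP.
have -> : (fun x => [forall i, P i x]) = (fun x => all (P^~ x) (enum I)).
  by apply/funext => x; apply/forallP/allP => H i => [_|]; apply: H; rewrite ?mem_enum.
by elim: (enum I) => [|i s IH] //=; exact: measurable_and.
Qed.

Lemma measurable_existsb (I : finType) (P : I -> T -> bool) :
  (forall i, measurable_fun setT (P i)) ->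
  measurable_fun setT (fun x => [exists i, P i x]).
Proof.
move=> mP; under eq_fun => x do rewrite -[[exists i, _]]negbK negb_exists.
by apply/measurable_neg/measurable_forallb => i; exact: measurable_neg.
Qed.

End MeasurableBool.

Section KnapsackMeasurable.
Variables (R : realType) (n : nat) (p : nat -> R).
Local Notation seqR := (seqR R).

Lemma measurable_dotp (x : sol n) : measurable_fun setT (fun w : seqR => dotp w x).
Proof.
apply: measurable_sum => i; apply: measurable_funM => //.
exact: measurable_coord.
Qed.

Lemma measurable_dotp_le (x : sol n) t :
  measurable_fun setT (fun w : seqR => dotp w x <= t).
Proof. exact: measurable_fun_ler (measurable_dotp x) (measurable_cst _). Qed.

Lemma measurable_dotp_gt (x : sol n) t :
  measurable_fun setT (fun w : seqR => t < dotp w x).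
Proof. exact: measurable_fun_ltr (measurable_cst _) (measurable_dotp x). Qed.

Lemma measurable_beats_below j t (y : sol n) :
  measurable_fun setT (fun w : seqR => beats_below p j t w y).
Proof.
apply: measurable_forallb => x; apply: measurable_implyb => //.
by apply: measurable_and => //; exact: measurable_dotp_le.
Qed.

Lemma measurable_winner_in (j : 'I_n) t e :
  measurable_fun setT (winner_in p j t e : seqR -> bool).
Proof.
apply: measurable_and.
  apply: measurable_existsb => y; apply: measurable_and => //.
  apply: measurable_and; [exact: measurable_beats_below | exact: measurable_dotp_le].
apply: measurable_forallb => y; apply: measurable_implyb.
  by apply: measurable_and => //; exact: measurable_beats_below.
exact: measurable_dotp_gt.
Qed.

Lemma measurable_pareto_optimal (x : sol n) :
  measurable_fun setT (fun w : seqR => pareto_optimal p w x).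
Proof.
apply: measurable_forallb => y; apply: measurable_neg.
apply: measurable_and => //; apply: measurable_and.
  exact: measurable_fun_ler (measurable_dotp y) (measurable_dotp x).
apply: measurable_or => //.
exact: measurable_fun_ltr (measurable_dotp y) (measurable_dotp x).
Qed.

Lemma measurable_interval_nonempty k i :
  measurable_fun setT (fun w : seqR => interval_nonempty n p w k i).
Proof.
apply: measurable_existsb => x; apply: measurable_and; last exact: measurable_dotp_le.
apply: measurable_and; [exact: measurable_pareto_optimal | exact: measurable_dotp_gt].
Qed.

End KnapsackMeasurable.

Section WinnerSection.
Variables (R : realType) (n : nat) (p : nat -> R).
Local Notation seqR := (seqR R).
Local Notation mu := (@lebesgue_measure R).

Lemma dotp_update (w : seqR) (j : 'I_n) s (y : sol n) :
  dotp (update w j s) y = (y j)%:R * s + dotp (update w j 0) y.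
Proof.
rewrite /dotp (bigD1 j) //= [X in _ = _ + X](bigD1 j) //= /update eqxx mulr0 add0r.
congr (_ + _); apply: eq_bigr => i ij.
by have -> : (nat_of_ord i == j) = false by exact: negbTE.
Qed.

Lemma beats_below_update (w : seqR) (j : 'I_n) t s (y : sol n) :
  beats_below p j t (update w j s) y = beats_below p j t (update w j 0) y.
Proof.
apply: eq_forallb => x; rewrite dotp_update.
by case: (x j) => //=; rewrite mul0r add0r.
Qed.

Lemma winner_in_section (w : seqR) (j : 'I_n) t e :
  exists a0 : R, forall s, winner_in p j t e (update w j s) -> a0 < s <= a0 + e.
Proof.
pose L := fun y : sol n => y j && beats_below p j t (update w j 0) y.
pose c := fun y : sol n => dotp (update w j 0) y.
have winnerE s : winner_in p j t e (update w j s) =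
    [exists y, L y && (s + c y <= t + e)] && [forall y, L y ==> (t < s + c y)].
  rewrite /winner_in /L /c; congr (_ && _).
    apply: eq_existsb => y; rewrite beats_below_update dotp_update.
    by case: (y j); rewrite ?mul1r.
  apply: eq_forallb => y; rewrite beats_below_update dotp_update.
  by case: (y j); rewrite ?mul1r.
have [y0 Ly0|noL] := pickP L; last first.
  by exists 0 => s; rewrite winnerE => /andP [/existsP [y]]; rewrite noL.
have [y1 Ly1 y1_min] := arg_minP c Ly0.
exists (t - c y1) => s; rewrite winnerE => /andP [/existsP [y /andP [Ly wy]] /forallP].
move=> /(_ y1); rewrite Ly1 /= => ty1.
rewrite ltrBlDr ty1 /= addrAC lerBrDr.
by apply: le_trans wy; rewrite lerD2l; exact: y1_min.
Qed.

Definition indicb (b : seqR -> bool) : seqR -> \bar R :=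
  fun w => if b w then 1%E else 0%E.

Lemma nonneg_mfun_indicb b : measurable_fun setT b -> nonneg_mfun (indicb b).
Proof.
move=> mb; split; first exact: measurable_fun_ifT.
by move=> w; rewrite /indicb; case: (b w).
Qed.

Lemma integrate_coord_winner_in_le (D : set R) (w : seqR) (j : 'I_n) t e :
  measurable D -> 0 <= e ->
  (integrate_coord D j (indicb (winner_in p j t e)) w <= e%:E)%E.
Proof.
move=> mD e0; have [a0 a0P] := winner_in_section w j t e.
pose A : set R := [set` `]a0, a0 + e]%R].
have mA : measurable A by exact: measurable_itv.
apply: (@le_trans _ _ (\int[mu]_(s in D) (\1_A s)%:E)%E).
  apply: ge0_le_integral => //.
  - by move=> s _; rewrite /indicb; case: ifP.
  - apply: measurable_fun_update_at.
    exact: (nonneg_mfun_indicb (measurable_winner_in p j t e)).1.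
  - exact/measurable_EFinP/measurable_indic.
  - move=> s _; rewrite /indicb; case: ifP => [/a0P sA|_]; last by rewrite lee_fin.
    by rewrite indicE mem_set.
rewrite integral_indic // (@le_trans _ _ (mu A)) //.
  by apply: le_measure; rewrite ?inE //; exact: measurableI.
rewrite lebesgue_measure_itv /= lte_fin; case: ifPn => _; last by rewrite lee_fin.
by rewrite -EFinD addrAC subrr add0r.
Qed.

End WinnerSection.

Section Expectation.
Variables (R : realType) (n : nat) (p : nat -> R) (k : nat).
Local Notation seqR := (seqR R).
Hypothesis p_ge0 : forall j : 'I_n, 0 <= p j.

(* The interval I_i^k is (slab_start i, slab_start i + slab_width]. *)
Definition slab_start (i : nat) : R := (n * i)%:R / k%:R.
Definition slab_width : R := n%:R / k%:R.

Lemma XkE (w : seqR) : ((Xk n p w k)%:R)%:E =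
  (1 + \sum_(i < k) indicb (fun v => interval_nonempty n p v k i) w)%E.
Proof.
rewrite /Xk natrD EFinD addeC; congr (_ + _)%E.
rewrite -sum1_card big_mkcond /= natr_sum -sumEFin.
apply: eq_bigr => i _; rewrite /indicb.
have -> : (i \in [set i : 'I_k | interval_nonempty n p w k i]) =
    interval_nonempty n p w k i.
  by apply/idP/idP => [/set_mem //|]; exact: mem_set.
by case: interval_nonempty.
Qed.

Lemma interval_nonempty_winner_in (w : seqR) (i : 'I_k) :
  interval_nonempty n p w k i ->
  [exists j : 'I_n, winner_in p j (slab_start i) slab_width w].
Proof.
move=> ne; apply: pareto_winner_in => //; first by rewrite divr_ge0.
have -> : slab_start i + slab_width = (n * i.+1)%:R / k%:R.
  by rewrite /slab_start /slab_width mulnS natrD mulrDl addrC.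
by move: ne => /existsP [x]; rewrite -andbA => ?; apply/existsP; exists x.
Qed.

Definition slab_winner (i : 'I_k) (j : 'I_n) : seqR -> \bar R :=
  indicb (winner_in p j (slab_start i) slab_width).

Lemma Xk_le_slab_winners (w : seqR) : (((Xk n p w k)%:R)%:E <=
  1%:E + \sum_(i < k) \sum_(j < n) slab_winner i j w)%E.
Proof.
have W_ge0 i j : (0 <= slab_winner i j w)%E by rewrite /slab_winner /indicb; case: ifP.
rewrite XkE leeD2l //; apply: lee_sum => i _; rewrite {1}/indicb.
case: ifP => [/interval_nonempty_winner_in/existsP [j wj] | _]; last first.
  by apply: sume_ge0 => j _.
rewrite (bigD1 j) //= {1}/slab_winner /indicb wj leeDl //.
by apply: sume_ge0 => j' _.
Qed.

Variables (a : nat -> R) (len : R).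
Hypothesis len_gt0 : 0 < len.

Lemma iter_int_Xk_le (w : seqR) :
  (iter_int a len n (fun v => ((Xk n p v k)%:R)%:E) w <=
   (len ^+ n + (slab_width * len ^+ n.-1) *+ n *+ k)%:E)%E.
Proof.
have W_mfun i j : nonneg_mfun (slab_winner i j).
  exact: nonneg_mfun_indicb (measurable_winner_in _ _ _ _).
have Wi_mfun i := nonneg_mfun_sum (index_enum _) (W_mfun i).
have one_mfun : nonneg_mfun ((fun=> (1 : R)%:E) : seqR -> _).
  by split=> // v; rewrite lee_fin.
have X_mfun : nonneg_mfun (fun v => ((Xk n p v k)%:R)%:E : \bar R).
  split=> [|v]; last by rewrite lee_fin ler0n.
  under eq_fun => v do rewrite XkE.
  apply/emeasurable_funD/emeasurable_sum => // i.
  exact: (nonneg_mfun_indicb (measurable_interval_nonempty _ _ _ _)).1.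
have WW_mfun := nonneg_mfun_sum (index_enum _) Wi_mfun.
have U_mfun := nonneg_mfun_add one_mfun WW_mfun.
apply: le_trans (le_iter_int a len n X_mfun U_mfun Xk_le_slab_winners w) _.
rewrite iter_intD // iter_int_cst // mul1r EFinD leeD2l // iter_int_sum //.
under eq_bigr => i _ do rewrite iter_int_sum //.
apply: (@le_trans _ _ (\sum_(i < k) \sum_(j < n) (slab_width * len ^+ n.-1)%:E)%E).
  apply: lee_sum => i _; apply: lee_sum => j _.
  have e_ge0 : 0 <= slab_width by rewrite divr_ge0.
  apply: (iter_int_le_coord_bound _ _ (W_mfun i j) (ltn_ord j) e_ge0) => // v.
  exact: integrate_coord_winner_in_le (measurable_coord_itv _ _ _) e_ge0.
by rewrite !sumEFin !sumr_const !card_ord.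
Qed.

End Expectation.

Lemma expect_unif_bound_algebra (R : realType) (n k : nat) (phi : R) : 0 < phi ->
  phi ^+ n * (phi^-1 ^+ n + (slab_width R n k * phi^-1 ^+ n.-1) *+ n *+ k)
  <= (n ^ 2)%:R * phi + 1.
Proof.
move=> phi0; rewrite mulrDr -exprMn mulfV ?gt_eqF // expr1n addrC lerD2r.
case: k => [|k]; first by rewrite mulr0n mulr0 mulr_ge0 // ltW.
case: n => [|m]; first by rewrite mulr0n mul0rn mulr0 mulr_ge0 // ltW.
rewrite /slab_width -mulrnA -(mulr_natr _ (m.+1 * k.+1)) exprVn exprS natrX natrM /=.
have phim_neq0 : phi ^+ m != 0 by rewrite expf_neq0 // gt_eqF.
rewrite le_eqVlt; apply/orP; left; apply/eqP.
by field; rewrite phim_neq0 nat1r pnatr_eq0.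
Qed.

Theorem lemma2p5 (R : realType) (n : nat) (phi : R) (p a : nat -> R) (k : nat) :
  1 <= phi ->
  (forall i, (i < n)%N -> 0 <= p i) ->
  (forall i, (i < n)%N -> 0 <= a i /\ a i + phi^-1 <= 1) ->
  (expect_unif n a phi (fun w => ((Xk n p w k)%:R)%:E) <= ((n ^ 2)%:R * phi + 1)%:E)%E.
Proof.
move=> phi1 p_ge0 _; have phi_gt0 : 0 < phi := lt_le_trans ltr01 phi1.
have len_gt0 : 0 < phi^-1 by rewrite invr_gt0.
have p_ge0' (j : 'I_n) : 0 <= p j by exact: p_ge0.
have phin_ge0 : (0 <= (phi ^+ n)%:E)%E by rewrite lee_fin exprn_ge0 // ltW.
have /(lee_wpmul2l phin_ge0) := @iter_int_Xk_le R n p k p_ge0' a _ len_gt0 (fun=> 0).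
move=> /le_trans; apply.
by rewrite -EFinM lee_fin expect_unif_bound_algebra.
Qed.
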